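(* Let $n\ge1$ and let $H:[0,\infty)^n\to[0,\infty)$ be continuous, non-decreasing and bounded from above by the minimum, i.e. $H(x_1,\dots,x_n)\le\min(x_1,\dots,x_n)$. Let $\omega_j,\xi_j\in(0,\infty)$, $j=0,1,\dots,n$, be such that $x^{1/(\xi_0\omega_0)}\le x\le x^{1/(\xi_i\omega_i)}$ and $x\ge x^{\omega_i/\omega_0}$ for all $x\in[0,\infty)$ and $i=1,\dots,n$. Then for every measurable space $(X,\mathcal{A})$, every comonotone system $f_1,\dots,f_n\in\mathcal{F}^{(X,\mathcal{A})}$ and every monotone measure $m\in\mathcal{M}^{(X,\mathcal{A})}$ with $\mathbf{Su}(m,f_i^{\xi_i})<\infty$ for $i=1,\dots,n$, \[ \big[\mathbf{Su}\big(m,(H(f_1,\dots,f_n))^{\xi_0}\big)\big]^{\omega_0}\ \ge\ H\Big[\big(\mathbf{Su}(m,f_1^{\xi_1})\big)^{\omega_1},\dots,\big(\mathbf{Su}(m,f_n^{\xi_n})\big)^{\omega_n}\Big]. \]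
   Context: A monotone measure on $(X,\mathcal{A})$ is $m:\mathcal{A}\to[0,\infty]$ with $m(\emptyset)=0$, $m(X)>0$, $m(A)\le m(B)$ for $A\subseteq B$; $\mathcal{M}^{(X,\mathcal{A})}$ is the set of these; $\mathcal{F}^{(X,\mathcal{A})}$ the set of $\mathcal{A}$-measurable $f:X\to[0,\infty]$. The Sugeno integral is $\mathbf{Su}(m,f)=\sup\{\min(t,m(\{f\ge t\})) : t\in(0,\infty]\}$. A comonotone system is a family of pairwise comonotone functions: $(f_i(x)-f_i(y))(f_j(x)-f_j(y))\ge0$ for all $x,y\in X$. *)

From HB Require Import structures.
From mathcomp Require Import all_boot all_order all_algebra.
From mathcomp Require Import all_classical all_reals all_analysis.
From mathcomp Require Import measurable_realfun lebesgue_measure.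
Set Implicit Arguments. Unset Strict Implicit. Unset Printing Implicit Defensive.
Import Order.TTheory GRing.Theory Num.Theory.
Import numFieldNormedType.Exports.
Local Open Scope classical_set_scope.
Local Open Scope ring_scope.

Definition monotone_measure (d : measure_display) (T : measurableType d)
  (R : realType) (m : set T -> \bar R) : Prop :=
  [/\ m set0 = 0%E, (0 < m setT)%E &
      forall A B, measurable A -> measurable B -> A `<=` B -> (m A <= m B)%E].

Definition nnmeasurable (d : measure_display) (T : measurableType d)
  (R : realType) (f : T -> \bar R) : Prop :=
  measurable_fun setT f /\ forall x, (0 <= f x)%E.

Definition Sugeno (d : measure_display) (T : measurableType d)
  (R : realType) (m : set T -> \bar R) (f : T -> \bar R) : \bar R :=
  ereal_sup [set Order.min t (m [set x | (t <= f x)%E]) |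
             t in [set t : \bar R | (0 < t)%E]].

(* comonotone system: (f_i x - f_i y)(f_j x - f_j y) >= 0 for all x, y,
   i.e. never f_i x < f_i y while f_j y < f_j x (order form, well defined
   for [0,+oo]-valued functions). *)
Definition comonotone_system (T : Type) (R : realType) (n : nat)
  (f : 'I_n -> T -> \bar R) : Prop :=
  forall i j x y, ~ ((f i x < f i y)%E /\ (f j y < f j x)%E).

(* Extension of H : [0,oo)^n -> [0,oo) to [0,oo]^n by monotone limit:
   Hbar(x) = sup_k H(min(x_1,k),...,min(x_n,k)).  Agrees with H on finite
   arguments when H is non-decreasing. *)
Definition Hext (R : realType) (n : nat) (H : 'rV[R]_n -> R)
  (x : 'I_n -> \bar R) : \bar R :=
  ereal_sup (range (fun k : nat =>
    (H (\row_i fine (Order.min (x i) (k%:R)%:E)))%:E)).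

From HB Require Import structures.
From mathcomp Require Import all_boot all_order all_algebra.
From mathcomp Require Import all_classical all_reals all_analysis.
From mathcomp Require Import measurable_realfun lebesgue_measure.
From mathcomp Require Import lra.
Import Order.TTheory GRing.Theory Num.Theory.
Import numFieldNormedType.Exports.
Local Open Scope classical_set_scope.
Local Open Scope ring_scope.
Set Implicit Arguments. Unset Strict Implicit. Unset Printing Implicit Defensive.

(* The exponent hypotheses force [xi i * omega i = 1] and [omega i = omega0],
   so all exponents coincide and, with [xi * omega = 1], it suffices to bound
   [H] at the point [p_i = a_i ^ omega], [a_i = Su(m, f_i ^ xi)].  Comonotone
   functions totally preorder [X], so their upper level sets form a chain of
   measurable sets.  For [s] slightly below [p] (continuity of [H]), each
   [s_i ^ xi < a_i] is witnessed by a level set of [f_i ^ xi]; the smallest of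
   them lies in all the others, hence in [{H(f) ^ xi >= H(s) ^ xi}], and its
   measure exceeds [s_k ^ xi >= H(s) ^ xi] because [H] is below the minimum. *)

Section PowerExponents.
Variable R : realType.

(* Comparing [x `^ a] with [x] at [x = 2] and [x = 1/2] pins [a] down. *)
Lemma eq1_of_powR_le_id (a : R) : (forall x, 0 <= x -> x `^ a <= x) -> a = 1.
Proof.
move=> pow_le.
have ln2_gt0 : 0 < ln (2 : R) by apply: ln_gt0; lra.
have lnV2 : ln (2^-1 : R) = - ln 2 by rewrite lnV ?posrE.
have h2 : a * ln 2 <= ln (2 : R).
  by rewrite -ln_powR ler_ln ?posrE ?powR_gt0 ?pow_le //; lra.
have hV2 : a * ln (2^-1) <= ln (2^-1 : R).
  by rewrite -ln_powR ler_ln ?posrE ?powR_gt0 ?invr_gt0 ?pow_le // ?invr_ge0; lra.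
rewrite lnV2 in hV2; apply/eqP; rewrite eq_le; apply/andP; split; nra.
Qed.

Lemma eq1_of_powR_ge_id (a : R) : (forall x, 0 <= x -> x <= x `^ a) -> a = 1.
Proof.
move=> pow_ge.
have ln2_gt0 : 0 < ln (2 : R) by apply: ln_gt0; lra.
have lnV2 : ln (2^-1 : R) = - ln 2 by rewrite lnV ?posrE.
have h2 : ln (2 : R) <= a * ln 2.
  by rewrite -ln_powR ler_ln ?posrE ?powR_gt0 ?pow_ge //; lra.
have hV2 : ln (2^-1 : R) <= a * ln (2^-1).
  by rewrite -ln_powR ler_ln ?posrE ?powR_gt0 ?invr_gt0 ?pow_ge // ?invr_ge0; lra.
rewrite lnV2 in hV2; apply/eqP; rewrite eq_le; apply/andP; split; nra.
Qed.

End PowerExponents.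

Section ComonotoneUpsets.
Variables (R : realType) (T : Type) (n : nat) (f : 'I_n -> T -> \bar R).

Lemma comonotone_le_total : comonotone_system f -> forall x y,
  (forall i, (f i x <= f i y)%E) \/ (forall i, (f i y <= f i x)%E).
Proof.
move=> cf x y; have [xy|] := pselect (forall i, (f i x <= f i y)%E); first by left.
move=> /existsNP[i /negP]; rewrite -ltNge => yx_i; right=> j.
by rewrite leNgt; apply/negP => xy_j; exact: (cf i j y x).
Qed.

Definition comonotone_upset (P : set T) :=
  forall x y, P x -> (forall i, (f i x <= f i y)%E) -> P y.

Lemma comonotone_upset_total (A B : set T) : comonotone_system f ->
  comonotone_upset A -> comonotone_upset B -> A `<=` B \/ B `<=` A.
Proof.
move=> cf upA upB; have [|] := pselect (A `<=` B); first by left.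
move=> /existsNP[x /not_implyP[Ax nBx]]; right=> y By.
have [xy|yx] := comonotone_le_total cf x y; first exact: upA Ax xy.
by exfalso; exact/nBx/(upB y).
Qed.

End ComonotoneUpsets.

(* With [L i] the supremum of [g i] off [P], comonotonicity puts [P] between
   [E = {x | forall i, L i <= g i x}] and [E] minus the set [F] where every
   [g i] equals [L i]; being an upset, [P] is one of these two sets. *)
Lemma comonotone_upset_measurable (R : realType) (d : measure_display)
    (X : measurableType d) (n : nat) (g : 'I_n -> X -> \bar R) (P : set X) :
  (forall i, measurable_fun setT (g i)) -> comonotone_system g ->
  comonotone_upset g P -> measurable P.
Proof.
move=> mg cg upP.
pose L i := ereal_sup [set g i x | x in ~` P].
pose E := \bigcap_(i in [set: 'I_n]) [set x | (L i <= g i x)%E].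
pose F := \bigcap_(i in [set: 'I_n]) [set x | g i x = L i].
have mE : measurable E.
  apply: fin_bigcap_measurable => [|i _]; first exact: finite_finset.
  have -> : [set x | (L i <= g i x)%E] = setT `&` g i @^-1` `[L i, +oo[%classic.
    by apply/seteqP; split=> x /=; rewrite (@in_itv _ (\bar R)) /= andbT; [|case].
  exact/mg/emeasurable_itv.
have mF : measurable F.
  apply: fin_bigcap_measurable => [|i _]; first exact: finite_finset.
  have -> : [set x | g i x = L i] = setT `&` g i @^-1` [set L i] by rewrite setTI.
  exact/mg/emeasurable_set1.
have PE x : P x -> E x.
  move=> Px i _ /=; apply: ge_ereal_sup => _ [w nPw <-].
  have [xw|//] := comonotone_le_total cg x w.
  by exfalso; exact/nPw/(upP x).
have EF x : E x -> ~ F x -> P x.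
  move=> Ex nFx; apply: contrapT => nPx; apply: nFx => i _ /=.
  by apply/eqP; rewrite eq_le (Ex i I) andbT; apply: ereal_sup_ubound; exists x.
have [[z [Pz Fz]]|nPF] := pselect (exists z, P z /\ F z).
- suff -> : P = E by [].
  apply/seteqP; split=> [x /PE //|x Ex].
  have [Fx|] := pselect (F x); last exact: EF.
  by apply: upP Pz _ => i; rewrite (Fz i I) (Fx i I).
- suff -> : P = E `\` F by exact: measurableD.
  apply/seteqP; split=> [x Px|x [] //]; last exact: EF.
  by split; [exact: PE | move=> Fx; apply: nPF; exists x].
Qed.

Lemma chain_has_least (T : Type) (I : finType) (A : I -> set T) (i0 : I) :
  (forall i j, A i `<=` A j \/ A j `<=` A i) -> exists k, forall i, A k `<=` A i.
Proof.
move=> total.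
suff [k kP] : exists k, forall i, i \in index_enum I -> A k `<=` A i.
  by exists k => i; apply/kP/mem_index_enum.
elim: (index_enum I) => [|a s [k kP]]; first by exists i0.
have [ak|ka] := total a k.
- by exists a => i; rewrite inE => /orP[/eqP-> //|/kP]; exact: subset_trans.
- by exists k => i; rewrite inE => /orP[/eqP-> //|/kP].
Qed.

Section SugenoLevels.
Variables (R : realType) (d : measure_display) (T : measurableType d).
Variables (m : set T -> \bar R) (g : T -> \bar R).

Lemma Sugeno_ge (t : \bar R) :
  (0 < t)%E -> (t <= m [set x | (t <= g x)%E])%E -> (t <= Sugeno m g)%E.
Proof. by move=> t_gt0 le_tm; apply: ereal_sup_ubound; exists t => //; exact: min_l. Qed.

Lemma Sugeno_gt_level (r : \bar R) : (r < Sugeno m g)%E ->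
  exists u, [/\ (0 < u)%E, (r < u)%E & (r < m [set x | (u <= g x)%E])%E].
Proof. by move=> /ereal_sup_gt[_ [u u_gt0 <-]]; rewrite lt_min => /andP[]; exists u. Qed.

Lemma Sugeno_ge0 : monotone_measure m ->
  measurable [set x | (1 <= g x)%E] -> (0 <= Sugeno m g)%E.
Proof.
move=> [m0 _ m_mono] mg1.
have : (Order.min 1 (m [set x | (1 <= g x)%E]) <= Sugeno m g)%E.
  by apply: ereal_sup_ubound; exists 1%E => //=; exact: lte01.
by apply: le_trans; rewrite le_min lee01 -m0 m_mono.
Qed.

End SugenoLevels.

Lemma nneg_min_natr_fin_num (R : realType) (x : \bar R) (k : nat) :
  (0 <= x)%E -> Order.min x (k%:R)%:E \is a fin_num.
Proof.
move=> x_ge0; rewrite ge0_fin_numE ?le_min ?x_ge0 ?lee_fin ?ler0n //.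
by apply: le_lt_trans (ltry (k%:R)); rewrite ge_min lexx orbT.
Qed.

Section ExtendedAggregation.
Variables (R : realType) (n : nat) (H : 'rV[R]_n -> R).
Hypothesis H_mono : forall x y : 'rV[R]_n, (forall i, 0 <= x ord0 i) ->
  (forall i, x ord0 i <= y ord0 i) -> H x <= H y.

Let truncate (x : 'I_n -> \bar R) (k : nat) : 'rV[R]_n :=
  \row_i fine (Order.min (x i) (k%:R)%:E).

Let truncate_ge0 x k : (forall i, (0 <= x i)%E) -> forall i, 0 <= truncate x k ord0 i.
Proof. by move=> x_ge0 i; rewrite mxE; apply: fine_ge0; rewrite le_min x_ge0 lee_fin ler0n. Qed.

Lemma Hext_ge0 (x : 'I_n -> \bar R) :
  (forall y : 'rV[R]_n, (forall i, 0 <= y ord0 i) -> 0 <= H y) ->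
  (forall i, (0 <= x i)%E) -> (0 <= Hext H x)%E.
Proof.
move=> H_ge0 x_ge0; apply: (@le_trans _ _ (H (truncate x 0))%:E).
  by rewrite lee_fin; apply: H_ge0; exact: truncate_ge0.
by apply: ereal_sup_ubound; exists 0%N.
Qed.

Lemma Hext_le (x y : 'I_n -> \bar R) :
  (forall i, (0 <= x i)%E) -> (forall i, (x i <= y i)%E) ->
  (Hext H x <= Hext H y)%E.
Proof.
move=> x_ge0 xy; apply: ge_ereal_sup => _ [k _ <-].
have y_ge0 i : (0 <= y i)%E := le_trans (x_ge0 i) (xy i).
apply: (@le_trans _ _ (H (truncate y k))%:E); last first.
  by apply: ereal_sup_ubound; exists k.
rewrite lee_fin; apply: H_mono => [|i]; first exact: truncate_ge0.
by rewrite !mxE fine_le ?nneg_min_natr_fin_num // le_min2 ?xy.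
Qed.

Lemma Hext_ge_EFin (x : 'I_n -> \bar R) (s : 'rV[R]_n) :
  (forall i, 0 <= s ord0 i) -> (forall i, ((s ord0 i)%:E <= x i)%E) ->
  ((H s)%:E <= Hext H x)%E.
Proof.
move=> s_ge0 sx.
have x_ge0 i : (0 <= x i)%E by apply: le_trans (sx i); rewrite lee_fin.
pose K := Num.Def.archi_bound (\sum_j s ord0 j).
have sK i : s ord0 i <= K%:R.
  apply: (@le_trans _ _ (\sum_j s ord0 j)).
    by rewrite (bigD1 i) //= lerDl sumr_ge0.
  exact/ltW/archi_boundP/sumr_ge0.
apply: (@le_trans _ _ (H (truncate x K))%:E); last first.
  by apply: ereal_sup_ubound; exists K.
rewrite lee_fin H_mono // => i; rewrite mxE -lee_fin fineK ?nneg_min_natr_fin_num //.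
by rewrite le_min sx lee_fin sK.
Qed.

End ExtendedAggregation.

Lemma continuous_within_nneg_gt (R : realType) (n : nat) (H : 'rV[R]_n -> R)
    (p : 'rV[R]_n) (tau : R) :
  {within [set x : 'rV[R]_n | forall i, 0 <= x ord0 i], continuous H} ->
  (forall i, 0 <= p ord0 i) -> tau < H p ->
  exists2 e, 0 < e & forall y : 'rV[R]_n, (forall i, 0 <= y ord0 i) ->
    (forall i, `|p ord0 i - y ord0 i| < e) -> tau < H y.
Proof.
move=> /subspace_continuousP H_cont p_ge0 tau_lt.
have /(_ (within_filter _ _)) := cvgr_gt _ (H_cont p p_ge0) _ tau_lt.
rewrite /within /= => /nbhs_ballP[e e_gt0 ballP].
exists e => // y y_ge0 py; apply: ballP => //.
by split=> // i j; rewrite (ord1 i) /ball /=.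
Qed.

Lemma EFin_le_of_pos_lt (R : realType) (b : R) (S : \bar R) : 0 < b ->
  (forall t : R, 0 < t -> t < b -> (t%:E <= S)%E) -> (b%:E <= S)%E.
Proof.
move=> b_gt0 tS.
have b2S : ((b / 2)%:E <= S)%E by apply: tS; lra.
case: S tS b2S => [s| |] tS //; rewrite ?leey // !lee_fin => b2s.
rewrite leNgt; apply/negP => sb.
by have := tS ((s + b) / 2); rewrite lee_fin; lra.
Qed.

Lemma ge0_ler_poweR (R : realType) (r : R) (x y : \bar R) :
  0 <= r -> (0 <= x)%E -> (x <= y)%E -> (x `^ r <= y `^ r)%E.
Proof.
move=> r_ge0 x_ge0 xy; apply: gt0_ler_poweR; rewrite ?in_itv /= ?leey ?andbT //.
exact: le_trans xy.
Qed.

Section ComonotoneSugeno.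
Variables (R : realType) (n : nat) (d : measure_display) (T : measurableType d).
Variables (f : 'I_n -> T -> \bar R) (m : set T -> \bar R) (xi : R).
Hypotheses (f_nn : forall i, nnmeasurable (f i)) (f_com : comonotone_system f).
Hypotheses (m_mono : monotone_measure m) (xi_gt0 : 0 < xi).

Let f_ge0 i x : (0 <= f i x)%E := (f_nn i).2 x.
Let f_meas i : measurable_fun setT (f i) := (f_nn i).1.

Let poweR_le (x y : \bar R) : (0 <= x)%E -> (x <= y)%E -> (x `^ xi <= y `^ xi)%E.
Proof. exact/ge0_ler_poweR/ltW. Qed.

Let level_upset (g : T -> \bar R) (u : \bar R) :
  (forall x y, (forall i, (f i x <= f i y)%E) -> (g x <= g y)%E) ->
  comonotone_upset f [set x | (u <= g x)%E].
Proof. by move=> g_mono x y /= ux /g_mono; exact: le_trans. Qed.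

Let pow_level_upset i u : comonotone_upset f [set x | (u <= f i x `^ xi)%E].
Proof. by apply: level_upset => x y /(_ i); exact: poweR_le. Qed.

Lemma Sugeno_powR_ge0 i : (0 <= Sugeno m (fun x => f i x `^ xi))%E.
Proof. exact/Sugeno_ge0/(comonotone_upset_measurable f_meas f_com)/pow_level_upset. Qed.

(* The level sets of the [f i] form a chain, so the smallest of the level
   sets witnessing [r i < Sugeno m (f i ^ xi)] lies in all the others. *)
Lemma Sugeno_common_level (i0 : 'I_n) (r : 'I_n -> \bar R) :
  (forall i, (r i < Sugeno m (fun x => f i x `^ xi))%E) ->
  exists A : set T, [/\ comonotone_upset f A, exists k, (r k < m A)%E
                      & forall x, A x -> forall i, (r i < f i x `^ xi)%E].
Proof.
move=> r_lt; have /choice[u uP] := fun i => Sugeno_gt_level (r_lt i).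
pose A i := [set x | (u i <= f i x `^ xi)%E].
have [k kP] : exists k, forall i, A k `<=` A i.
  apply: (chain_has_least i0) => i j.
  exact: comonotone_upset_total f_com (@pow_level_upset i (u i)) (@pow_level_upset j (u j)).
exists (A k); split; [exact: (@pow_level_upset k (u k)) | by exists k; case: (uP k) |].
by move=> x Akx i; have [_ + _] := uP i; move/lt_le_trans; apply; exact: kP.
Qed.

Variable H : 'rV[R]_n -> R.
Hypothesis H_ge0 : forall x : 'rV[R]_n, (forall i, 0 <= x ord0 i) -> 0 <= H x.
Hypothesis H_mono : forall x y : 'rV[R]_n, (forall i, 0 <= x ord0 i) ->
  (forall i, x ord0 i <= y ord0 i) -> H x <= H y.
Hypothesis H_le_min : forall x : 'rV[R]_n, (forall i, 0 <= x ord0 i) ->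
  forall i, H x <= x ord0 i.

Let G x := (Hext H (fun i => f i x) `^ xi)%E.

Lemma Sugeno_Hext_ge (i0 : 'I_n) (s : 'rV[R]_n) :
  (forall i, 0 <= s ord0 i) -> 0 < H s ->
  (forall i, ((s ord0 i `^ xi)%:E < Sugeno m (fun x => f i x `^ xi))%E) ->
  ((H s `^ xi)%:E <= Sugeno m G)%E.
Proof.
move=> s_ge0 Hs_gt0 s_lt.
have [A [upA [k sk_lt] A_gt]] := Sugeno_common_level i0 s_lt.
have A_le_G : A `<=` [set x | ((H s `^ xi)%:E <= G x)%E].
  move=> x Ax; rewrite /= /G -poweR_EFin; apply: poweR_le; first by rewrite lee_fin ltW.
  apply: Hext_ge_EFin => // i; rewrite leNgt; apply/negP => fs_lt.
  have := A_gt x Ax i; rewrite -poweR_EFin ltNge.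
  by rewrite poweR_le // ltW.
have upG : comonotone_upset f [set x | ((H s `^ xi)%:E <= G x)%E].
  apply: level_upset => x y xy; apply: poweR_le; first exact: Hext_ge0 H_ge0 (f_ge0^~ x).
  exact: Hext_le.
have [_ _ m_le] := m_mono.
have mA := comonotone_upset_measurable f_meas f_com upA.
have mG := comonotone_upset_measurable f_meas f_com upG.
apply: Sugeno_ge; first by rewrite lte_fin powR_gt0.
apply: le_trans (m_le _ _ mA mG A_le_G).
apply: le_trans (ltW sk_lt); rewrite lee_fin ge0_ler_powR ?nnegrE ?(ltW xi_gt0) //.
- exact: ltW.
- exact: H_le_min.
Qed.

Hypothesis H_cont :
  {within [set x : 'rV[R]_n | forall i, 0 <= x ord0 i], continuous H}.
Variable w : R.
Hypotheses (w_gt0 : 0 < w) (xi_w : xi * w = 1).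

Lemma Sugeno_Hext_powR_ge (i0 : 'I_n) :
  (forall i, (Sugeno m (fun x => f i x `^ xi) < +oo)%E) ->
  ((H (\row_i fine (Sugeno m (fun x => (f i x `^ xi)%E)) `^ w))%:E
    <= Sugeno m G `^ w)%E.
Proof.
move=> Su_fin.
pose a i := fine (Sugeno m (fun x => (f i x `^ xi)%E)).
have aE i : Sugeno m (fun x => (f i x `^ xi)%E) = (a i)%:E.
  by rewrite fineK // ge0_fin_numE ?Su_fin ?Sugeno_powR_ge0.
have a_ge0 i : 0 <= a i by rewrite -lee_fin -aE Sugeno_powR_ge0.
pose p := \row_i (a i `^ w); rewrite -/(a _) -/p.
have p_ge0 i : 0 <= p ord0 i by rewrite mxE powR_ge0.
have [Hp_le0|Hp_gt0] := leP (H p) 0.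
  by apply: le_trans (poweR_ge0 _ _); rewrite lee_fin.
apply: EFin_le_of_pos_lt => // t t_gt0 t_lt.
have [e e_gt0 eP] := continuous_within_nneg_gt H_cont p_ge0 t_lt.
pose eps := Num.min (e / 2) (H p / 2).
have eps_gt0 : 0 < eps by rewrite lt_min; apply/andP; split; lra.
have [eps_le_e eps_le_Hp] : eps <= e / 2 /\ eps <= H p / 2.
  by split; rewrite ge_min lexx ?orbT.
pose s := \row_i (p ord0 i - eps).
have s_ge0 i : 0 <= s ord0 i by rewrite mxE; have := H_le_min p_ge0 i; lra.
have Hs_gt : t < H s by apply: eP => // i; rewrite !mxE opprB addrC subrK gtr0_norm; lra.
have s_lt i : ((s ord0 i `^ xi)%:E < Sugeno m (fun x => (f i x `^ xi)%E))%E.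
  rewrite aE lte_fin -[X in _ < X](powRr1 (a_ge0 i)) -xi_w mulrC powRrM.
  have := s_ge0 i; rewrite !mxE => s_ge0_i.
  by apply: gt0_ltr_powR; rewrite ?nnegrE ?powR_ge0 //; lra.
have Hs_gt0 := lt_trans t_gt0 Hs_gt.
have := ge0_ler_poweR (ltW w_gt0) (poweR_ge0 (H s)%:E xi) (Sugeno_Hext_ge i0 s_ge0 Hs_gt0 s_lt).
rewrite -poweRrM xi_w poweRe1 ?lee_fin ?(ltW Hs_gt0) //.
by apply: le_trans; rewrite lee_fin ltW.
Qed.

End ComonotoneSugeno.

Theorem corollary3p7 (R : realType) (n : nat) (H : 'rV[R]_n -> R)
  (omega0 xi0 : R) (omega xi : 'I_n -> R) :
  (1 <= n)%N ->
  (forall x : 'rV[R]_n, (forall i, 0 <= x ord0 i) -> 0 <= H x) ->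
  {within [set x : 'rV[R]_n | forall i, 0 <= x ord0 i], continuous H} ->
  (forall x y : 'rV[R]_n, (forall i, 0 <= x ord0 i) ->
     (forall i, x ord0 i <= y ord0 i) -> H x <= H y) ->
  (forall x : 'rV[R]_n, (forall i, 0 <= x ord0 i) ->
     forall i, H x <= x ord0 i) ->
  0 < omega0 -> 0 < xi0 -> (forall i, 0 < omega i) -> (forall i, 0 < xi i) ->
  (forall x : R, 0 <= x -> x `^ (1 / (xi0 * omega0)) <= x) ->
  (forall i (x : R), 0 <= x -> x <= x `^ (1 / (xi i * omega i))) ->
  (forall i (x : R), 0 <= x -> x `^ (omega i / omega0) <= x) ->
  forall (d : measure_display) (T : measurableType d)
    (f : 'I_n -> T -> \bar R) (m : set T -> \bar R),
  (forall i, nnmeasurable (f i)) ->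
  comonotone_system f ->
  monotone_measure m ->
  (forall i, (Sugeno m (fun x => (f i x `^ xi i)%E) < +oo)%E) ->
  ((H (\row_i (fine (Sugeno m (fun x => (f i x `^ xi i)%E))) `^ omega i))%:E
   <= (Sugeno m (fun x => ((Hext H (fun i => f i x)) `^ xi0)%E)) `^ omega0)%E.
Proof.
move=> n_gt0 H_ge0 H_cont H_mono H_le_min omega0_gt0 xi0_gt0 _ _ pow0 powi powwi.
move=> d T f m f_nn f_com m_mono Su_fin.
have inv_eq1 (a : R) : 1 / a = 1 -> a = 1 by rewrite div1r => /eqP; rewrite invr_eq1 => /eqP.
have xi0_omega0 : xi0 * omega0 = 1 by exact/inv_eq1/eq1_of_powR_le_id/pow0.
have xi_omega i : xi i * omega i = 1 by exact/inv_eq1/eq1_of_powR_ge_id/powi.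
have omegaE i : omega i = omega0.
  by rewrite -[omega i](divfK (lt0r_neq0 omega0_gt0)) (eq1_of_powR_le_id (powwi i)) mul1r.
have xiE i : xi i = xi0.
  by apply: (mulIf (lt0r_neq0 omega0_gt0)); rewrite -{1}(omegaE i) xi_omega xi0_omega0.
rewrite (funext omegaE) (funext xiE) in Su_fin *.
exact: (Sugeno_Hext_powR_ge f_nn f_com m_mono xi0_gt0 H_ge0 H_mono H_le_min H_cont
  omega0_gt0 xi0_omega0 (Ordinal n_gt0) Su_fin).
Qed.
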